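(* Suppose $(\mathcal W,\mathcal W,\mu)$ is a reduced system of the FTvN system $(\mathcal V,\mathcal W,\lambda)$. Let $C_{\mathcal V}$ and $C_{\mathcal W}$ denote the centers of $(\mathcal V,\mathcal W,\lambda)$ and $(\mathcal W,\mathcal W,\mu)$ respectively. Then: (a) $\operatorname{ran}\mu=\operatorname{ran}\lambda$ and $\mu^2=\mu$. (b) $\lambda(C_{\mathcal V})=\mu(C_{\mathcal W})=C_{\mathcal W}$. (c) $\dim C_{\mathcal V}=\dim\lambda(C_{\mathcal V})=\dim\mu(C_{\mathcal W})=\dim C_{\mathcal W}$. (d) $e$ is a unit element of $(\mathcal V,\mathcal W,\lambda)$ if and only if $\lambda(e)$ is a unit element of $(\mathcal W,\mathcal W,\mu)$.
   Context: A Fan-Theobald-von Neumann (FTvN) system is a triple $(\mathcal V,\mathcal W,\lambda)$ where $\mathcal V,\mathcal W$ are real inner product spaces and $\lambda:\mathcal V\to\mathcal W$ is a map such that: (A1) $\|\lambda(x)\|=\|x\|$ for all $x$; (A2) $\langle x,y\rangle\le\langle\lambda(x),\lambda(y)\rangle$ for all $x,y$; (A3) for every $c\in\mathcal V$ and $q\in\lambda(\mathcal V)$ there exists $x$ with $\lambda(x)=q$ and $\langle c,x\rangle=\langle\lambda(c),\lambda(x)\rangle$. In a FTvN system, $x,y$ commute if $\langle x,y\rangle=\langle\lambda(x),\lambda(y)\rangle$; the center is the set of elements commuting with every element; a unit element is a nonzero $e$ such that the center equals $\mathbb Re$. A FTvN system $(\mathcal W,\mathcal W,\mu)$ is a reduced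 system of $(\mathcal V,\mathcal W,\lambda)$ if (C1) $\mu\circ\lambda=\lambda$ and (C2) $\operatorname{ran}\mu\subseteq\operatorname{ran}\lambda$. *)

From HB Require Import structures.
From mathcomp Require Import all_boot all_order all_algebra.
From mathcomp Require Import reals.
Set Implicit Arguments. Unset Strict Implicit. Unset Printing Implicit Defensive.
Import Order.TTheory GRing.Theory Num.Theory.
Local Open Scope ring_scope.

Section FTvN.
Variable R : realType.

Definition is_inner_product (V : lmodType R) (ip : V -> V -> R) : Prop :=
  [/\ (forall x y, ip x y = ip y x),
      (forall (a : R) x y z, ip (a *: x + y) z = a * ip x z + ip y z) &
      (forall x, x != 0 -> 0 < ip x x)].

Definition ipnorm (V : lmodType R) (ip : V -> V -> R) (x : V) : R :=
  Num.sqrt (ip x x).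

Definition FTvN_system (V W : lmodType R) (ipV : V -> V -> R)
    (ipW : W -> W -> R) (lam : V -> W) : Prop :=
  [/\ is_inner_product ipV, is_inner_product ipW,
      (forall x, ipnorm ipW (lam x) = ipnorm ipV x),
      (forall x y, ipV x y <= ipW (lam x) (lam y)) &
      (forall (c : V) (q : W), (exists u, lam u = q) ->
         exists x, lam x = q /\ ipV c x = ipW (lam c) (lam x))].

Definition ftvn_commute (V W : lmodType R) (ipV : V -> V -> R)
    (ipW : W -> W -> R) (lam : V -> W) (x y : V) : Prop :=
  ipV x y = ipW (lam x) (lam y).

Definition ftvn_center (V W : lmodType R) (ipV : V -> V -> R)
    (ipW : W -> W -> R) (lam : V -> W) (x : V) : Prop :=
  forall y, ftvn_commute ipV ipW lam x y.

Definition ftvn_unit (V W : lmodType R) (ipV : V -> V -> R)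
    (ipW : W -> W -> R) (lam : V -> W) (e : V) : Prop :=
  e != 0 /\ (forall x, ftvn_center ipV ipW lam x <-> exists a : R, x = a *: e).

Definition reduced_system (V W : lmodType R) (ipV : V -> V -> R)
    (ipW : W -> W -> R) (lam : V -> W) (mu : W -> W) : Prop :=
  [/\ FTvN_system ipW ipW mu,
      (forall x, mu (lam x) = lam x) &
      (forall w, exists x, mu w = lam x)].

End FTvN.

(* On the centre of an FTvN system, lam is a linear isometry.  For a reduced
   system, central elements of mu are fixed by mu, and x is central for lam
   exactly when lam x is central for mu: one direction is A2 for mu at lam x
   and at lam (- x) = - lam x, the other is A3 (see center_of_lam_opp).  Hence
   lam maps C_V linearly and bijectively onto C_W = mu(C_W), which gives
   (b), (c) and (d); (a) is immediate from C1 and C2. *)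

From HB Require Import structures.
From mathcomp Require Import all_boot all_order all_algebra.
From mathcomp Require Import reals.
From mathcomp Require Import ring zify.
From Stdlib Require Import Classical.
Import Order.TTheory GRing.Theory Num.Theory.
Local Open Scope ring_scope.
Set Implicit Arguments. Unset Strict Implicit.

Section InnerProduct.
Variables (R : realType) (U : lmodType R) (ip : U -> U -> R).
Hypothesis ipP : is_inner_product ip.

Lemma innerC x y : ip x y = ip y x. Proof. by case: ipP. Qed.

Lemma innerDl x y z : ip (x + y) z = ip x z + ip y z.
Proof. by case: ipP => _ ipDZ _; have := ipDZ 1 x y z; rewrite scale1r mul1r. Qed.

Lemma inner0l z : ip 0 z = 0.
Proof. by apply: (addrI (ip 0 z)); rewrite addr0 -innerDl addr0. Qed.

Lemma innerZl a x z : ip (a *: x) z = a * ip x z.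
Proof. by case: ipP => _ ipDZ _; have := ipDZ a x 0 z; rewrite !addr0 inner0l addr0. Qed.

Lemma innerNl x z : ip (- x) z = - ip x z.
Proof. by rewrite -scaleN1r innerZl mulN1r. Qed.

Lemma innerBl x y z : ip (x - y) z = ip x z - ip y z.
Proof. by rewrite innerDl innerNl. Qed.

Lemma innerDr x y z : ip z (x + y) = ip z x + ip z y.
Proof. by rewrite innerC innerDl ![ip _ z]innerC. Qed.

Lemma innerZr a x z : ip z (a *: x) = a * ip z x.
Proof. by rewrite innerC innerZl innerC. Qed.

Lemma innerNr x z : ip z (- x) = - ip z x.
Proof. by rewrite innerC innerNl innerC. Qed.

Lemma innerBr x y z : ip z (x - y) = ip z x - ip z y.
Proof. by rewrite innerDr innerNr. Qed.

Lemma inner_ge0 x : 0 <= ip x x.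
Proof.
have [->|x_neq0] := eqVneq x 0; first by rewrite inner0l.
by case: ipP => _ _ /(_ x x_neq0) /ltW.
Qed.

Lemma inner_eq0 x : ip x x = 0 -> x = 0.
Proof.
have [//|x_neq0] := eqVneq x 0.
by case: ipP => _ _ /(_ x x_neq0); rewrite lt0r => /andP[/eqP].
Qed.

Lemma inner_sub_comb p u v a :
  ip (p - (a *: u + v)) (p - (a *: u + v)) =
  ip p p - 2 * a * ip u p - 2 * ip v p
  + a ^+ 2 * ip u u + 2 * a * ip u v + ip v v.
Proof.
rewrite !(innerBl, innerBr, innerDl, innerDr, innerZl, innerZr).
rewrite [ip p u]innerC [ip p v]innerC [ip v u]innerC; ring.
Qed.

End InnerProduct.

Section FTvNSystem.
Variables (R : realType) (V W : lmodType R).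
Variables (ipV : V -> V -> R) (ipW : W -> W -> R) (lam : V -> W).
Hypothesis ftvn : FTvN_system ipV ipW lam.

Let ipVP : is_inner_product ipV. Proof. by case: ftvn. Qed.
Let ipWP : is_inner_product ipW. Proof. by case: ftvn. Qed.
Local Notation center := (ftvn_center ipV ipW lam).

Lemma lam_inner_le x y : ipV x y <= ipW (lam x) (lam y).
Proof. by case: ftvn. Qed.

Lemma lam_inner_self x : ipW (lam x) (lam x) = ipV x x.
Proof.
case: ftvn => _ _ lam_norm _ _; have /eqP := lam_norm x.
by rewrite /ipnorm eqr_sqrt ?inner_ge0 // => /eqP.
Qed.

Lemma lam_eq0 x : (lam x == 0) = (x == 0).
Proof.
apply/eqP/eqP => [lx0|->].
  by apply: (inner_eq0 ipVP); rewrite -lam_inner_self lx0 inner0l.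
by apply: (inner_eq0 ipWP); rewrite lam_inner_self inner0l.
Qed.

Lemma center_innerE x : center x -> forall y, ipW (lam x) (lam y) = ipV x y.
Proof. by move=> Cx y; rewrite Cx. Qed.

(* As x and y commute with everything, the expansion of
   |lam (a x + y) - (a lam x + lam y)|^2 agrees term by term with that of
   |(a x + y) - (a x + y)|^2 = 0. *)
Lemma lam_center_comb a x y :
  center x -> center y -> lam (a *: x + y) = a *: lam x + lam y.
Proof.
move=> /center_innerE Cx /center_innerE Cy; apply/subr0_eq/(inner_eq0 ipWP).
rewrite inner_sub_comb // lam_inner_self !Cx !Cy -inner_sub_comb //.
by rewrite subrr inner0l.
Qed.

Lemma center_comb a x y : center x -> center y -> center (a *: x + y).
Proof.
move=> Cx Cy z; rewrite /ftvn_commute lam_center_comb //.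
by rewrite !(innerDl ipVP, innerZl ipVP, innerDl ipWP, innerZl ipWP) Cx Cy.
Qed.

Lemma lam0 : lam 0 = 0.
Proof. by apply/eqP; rewrite lam_eq0. Qed.

Lemma center0 : center 0.
Proof. by move=> y; rewrite /ftvn_commute lam0 (inner0l ipVP) (inner0l ipWP). Qed.

Lemma lam_centerZ a x : center x -> lam (a *: x) = a *: lam x.
Proof.
by move=> Cx; rewrite -[a *: x]addr0 lam_center_comb ?lam0 ?addr0 //; apply: center0.
Qed.

Lemma centerZ a x : center x -> center (a *: x).
Proof. by move=> Cx; rewrite -[a *: x]addr0; apply: center_comb => //; apply: center0. Qed.

Lemma lam_centerN x : center x -> lam (- x) = - lam x.
Proof. by move=> Cx; rewrite -scaleN1r lam_centerZ // scaleN1r. Qed.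

Lemma lam_center_inj x y : center x -> center y -> lam x = lam y -> x = y.
Proof.
move=> Cx Cy lxy; apply/subr0_eq/eqP; rewrite -lam_eq0 addrC -scaleN1r.
by rewrite lam_center_comb // lxy scaleN1r addNr.
Qed.

(* A3 applied to [c := x] and [q := - lam x] produces [x'] with [lam x' = - lam x]
   attaining the bound of A2 against [x]; this forces [x' = - x], and then A2 for
   both [x] and [- x] squeezes [ipV x y] onto [ipW (lam x) (lam y)]. *)
Lemma center_of_lam_opp x : (exists u, lam u = - lam x) -> center x.
Proof.
move=> lamN_range; have [_ _ _ _ A3] := ftvn.
have [x' [lx' xx']] := A3 x (- lam x) lamN_range.
have x'E : x' = - x.
  apply/subr0_eq/(inner_eq0 ipVP); rewrite opprK.
  rewrite !(innerDl ipVP, innerDr ipVP) [ipV x' x]innerC // xx'.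
  rewrite -!lam_inner_self lx' !(innerNl ipWP, innerNr ipWP) opprK; ring.
move=> y; apply/le_anti; rewrite lam_inner_le /=.
have := lam_inner_le x' y; rewrite lx' x'E (innerNl ipVP) (innerNl ipWP).
by rewrite lerN2.
Qed.

End FTvNSystem.

Section ReducedSystem.
Variables (R : realType) (V W : lmodType R).
Variables (ipV : V -> V -> R) (ipW : W -> W -> R) (lam : V -> W) (mu : W -> W).
Hypothesis ftvn : FTvN_system ipV ipW lam.
Hypothesis red : reduced_system ipV ipW lam mu.

Let ipWP : is_inner_product ipW. Proof. by case: ftvn. Qed.
Let ftvn_mu : FTvN_system ipW ipW mu. Proof. by case: red. Qed.
Let mu_lam x : mu (lam x) = lam x. Proof. by case: red. Qed.
Let mu_range w : exists x, mu w = lam x. Proof. by case: red. Qed.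
Local Notation centerV := (ftvn_center ipV ipW lam).
Local Notation centerW := (ftvn_center ipW ipW mu).

Lemma mu_idem w : mu (mu w) = mu w.
Proof. by have [x ->] := mu_range w; rewrite mu_lam. Qed.

Lemma range_mu w : (exists w', mu w' = w) <-> (exists x, lam x = w).
Proof.
split=> [[w' <-]|[x <-]]; last by exists (lam x); rewrite mu_lam.
by have [x ->] := mu_range w'; exists x.
Qed.

Lemma mu_center_fixed w : centerW w -> mu w = w.
Proof.
move=> Cw; have w_muw : ipW w (mu w) = ipW w w.
  by rewrite Cw mu_idem (lam_inner_self ftvn_mu).
apply/subr0_eq/(inner_eq0 ipWP).
rewrite !(innerBl ipWP, innerBr ipWP) (lam_inner_self ftvn_mu) [ipW (mu w) w]innerC //.
by rewrite w_muw !subrr.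
Qed.

Lemma lam_center x : centerV x -> centerW (lam x).
Proof.
move=> Cx z; apply/le_anti; rewrite /ftvn_commute mu_lam.
have := lam_inner_le ftvn_mu (lam x) z; rewrite mu_lam => -> /=.
have := lam_inner_le ftvn_mu (lam (- x)) z.
by rewrite mu_lam (lam_centerN ftvn) // (innerNl ipWP) (innerNl ipWP) lerN2.
Qed.

Lemma centerW_lam_range w : centerW w -> exists x, lam x = w.
Proof. by move=> Cw; have [x muw] := mu_range w; exists x; rewrite -muw mu_center_fixed. Qed.

Lemma centerW_lam x : centerW (lam x) -> centerV x.
Proof.
move=> Clx; apply: (center_of_lam_opp ftvn); apply: centerW_lam_range.
by rewrite -scaleN1r; apply: (centerZ ftvn_mu).
Qed.

Lemma lam_center_image w : (exists x, centerV x /\ lam x = w) <-> centerW w.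
Proof.
split=> [[x [Cx <-]]|Cw]; first exact: lam_center.
have [x lx] := centerW_lam_range Cw.
by exists x; split=> //; apply: centerW_lam; rewrite lx.
Qed.

Lemma mu_center_image w : (exists w', centerW w' /\ mu w' = w) <-> centerW w.
Proof.
split=> [[w' [Cw' <-]]|Cw]; first by rewrite mu_center_fixed.
by exists w; rewrite mu_center_fixed.
Qed.

Lemma center_line_lam e : centerV e ->
  (forall x, centerV x <-> exists a, x = a *: e) <->
  (forall w, centerW w <-> exists a, w = a *: lam e).
Proof.
move=> Ce; split=> lineE.
  move=> w; split=> [Cw|[a ->]].
    have [x [Cx <-]] := (lam_center_image w).2 Cw.
    by have [a ->] := (lineE x).1 Cx; exists a; rewrite (lam_centerZ ftvn).
  by rewrite -(lam_centerZ ftvn) //; apply/lam_center/(centerZ ftvn).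
move=> x; split=> [Cx|[a ->]]; last exact: (centerZ ftvn).
have [a lxE] := (lineE (lam x)).1 (lam_center Cx).
exists a; apply: (lam_center_inj ftvn) => //; first exact: (centerZ ftvn).
by rewrite (lam_centerZ ftvn).
Qed.

Lemma unit_lam e : ftvn_unit ipV ipW lam e <-> ftvn_unit ipW ipW mu (lam e).
Proof.
rewrite /ftvn_unit (lam_eq0 ftvn).
split=> [[e_neq0 lineV]|[e_neq0 lineW]]; split=> //.
  by apply/center_line_lam=> //; apply/lineV; exists 1; rewrite scale1r.
have Ce : centerV e by apply/centerW_lam/lineW; exists 1; rewrite scale1r.
by apply/center_line_lam.
Qed.

End ReducedSystem.

Lemma dimv_add_line_gt (K : fieldType) (U : vectType K) (S : {vspace U}) x :
  x \notin S -> (\dim S < \dim (S + <[x]>))%N.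
Proof.
move=> xS; rewrite ltnNge; apply: contra xS => dim_le.
have /eqP -> : S == (S + <[x]>)%VS by rewrite eqEdim addvSl dim_le.
exact: subvP (addvSr _ _) _ (memv_line x).
Qed.

Section SubspacePredicate.
Variables (K : fieldType) (U : vectType K) (P : U -> Prop).
Hypotheses (P0 : P 0) (Pcomb : forall a x y, P x -> P y -> P (a *: x + y)).

Lemma addv_line_pred (S : {vspace U}) x :
  (forall y, y \in S -> P y) -> P x -> forall y, y \in (S + <[x]>)%VS -> P y.
Proof.
move=> SP Px y /memv_addP[u uS [v /vlineP[k ->] ->]].
by rewrite addrC; apply: Pcomb => //; apply: SP.
Qed.

Lemma vspace_of_pred : exists S : {vspace U}, forall x, x \in S <-> P x.
Proof.
suff grow n (S : {vspace U}) : (\dim {:U} - \dim S < n)%N ->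
    (forall x, x \in S -> P x) -> exists S' : {vspace U}, forall x, x \in S' <-> P x.
  apply: (grow (\dim {:U}).+1 0%VS); first by rewrite ltnS leq_subr.
  move=> x.
  by rewrite memv0 => /eqP ->.
elim: n S => [//|n IH] S codimS SP.
case: (classic (exists2 x, P x & x \notin S)) => [[x Px xS]|no_witness]; last first.
  exists S => x; split=> [/SP //|Px].
  by apply/negPn/negP => xS; apply: no_witness; exists x.
have dim_gt := dimv_add_line_gt xS.
have dim_le := dimvS (subvf (S + <[x]>)%VS).
by apply: (IH (S + <[x]>)%VS); [lia | exact: addv_line_pred].
Qed.

End SubspacePredicate.

Section DimensionTransfer.
Variables (K : fieldType) (U1 U2 : vectType K).
Variables (S1 : {vspace U1}) (S2 : {vspace U2}) (f : U1 -> U2).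
Hypothesis f_comb : forall a x y, x \in S1 -> y \in S1 -> f (a *: x + y) = a *: f x + f y.

Lemma linear_on_sum n (k : 'I_n -> K) (g : 'I_n -> U1) : (forall i, g i \in S1) ->
  f (\sum_(i < n) k i *: g i) = \sum_(i < n) k i *: f (g i).
Proof.
move=> gS; have f0 : f 0 = 0.
  have := f_comb 1 (mem0v S1) (mem0v S1); rewrite !scale1r addr0 => f00.
  by apply: (addrI (f 0)); rewrite addr0 -f00.
suff [] : \sum_(i < n) k i *: g i \in S1 /\
          f (\sum_(i < n) k i *: g i) = \sum_(i < n) k i *: f (g i) by [].
apply: (big_rec2 (fun s t => s \in S1 /\ f s = t)); first by rewrite mem0v f0.
by move=> i s t _ [sS <-]; rewrite memvD ?memvZ // f_comb.
Qed.

Lemma dimv_leq_inj_on : (forall x, x \in S1 -> f x \in S2) ->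
  (forall x, x \in S1 -> f x = 0 -> x = 0) -> (\dim S1 <= \dim S2)%N.
Proof.
move=> fS f_inj; set X := vbasis S1.
have XS (i : 'I_(\dim S1)) : X`_i \in S1 by rewrite vbasis_mem ?mem_nth ?size_tuple.
have fX_free : free (map_tuple f X).
  apply/freeP => k fX0 i; apply/freeP: i; first exact: basis_free (vbasisP S1).
  apply: f_inj; first by apply: memv_suml => j _; rewrite memvZ.
  rewrite linear_on_sum //; apply: etrans fX0; apply: eq_bigr => j _.
  by rewrite (nth_map 0) // size_tuple.
have fX_sub : (<<map_tuple f X>> <= S2)%VS.
  by apply/span_subvP => _ /mapP[x xX ->]; rewrite fS ?vbasis_mem.
by have := dimvS fX_sub; rewrite (eqP fX_free) size_tuple.
Qed.

Lemma dimv_leq_onto : (forall y, y \in S2 -> exists2 x, x \in S1 & f x = y) ->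
  (\dim S2 <= \dim S1)%N.
Proof.
move=> f_onto; set X := vbasis S1.
have XS (i : 'I_(\dim S1)) : X`_i \in S1 by rewrite vbasis_mem ?mem_nth ?size_tuple.
have S2_sub : (S2 <= <<map_tuple f X>>)%VS.
  apply/subvP => _ /f_onto[x xS <-].
  rewrite (coord_vbasis xS) linear_on_sum //; apply: memv_suml => i _.
  by rewrite memvZ // memv_span // map_f ?mem_nth ?size_tuple.
by rewrite (leq_trans (dimvS S2_sub)) // (leq_trans (dim_span _)) ?size_tuple.
Qed.

Lemma dimv_eq_bij_on : (forall x, x \in S1 -> f x \in S2) ->
  (forall x, x \in S1 -> f x = 0 -> x = 0) ->
  (forall y, y \in S2 -> exists2 x, x \in S1 & f x = y) -> \dim S1 = \dim S2.
Proof.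
by move=> fS f_inj f_onto; apply/eqP; rewrite eqn_leq dimv_leq_inj_on ?dimv_leq_onto.
Qed.

End DimensionTransfer.
Theorem proposition10p2 (R : realType) (V W : vectType R)
    (ipV : V -> V -> R) (ipW : W -> W -> R) (lam : V -> W) (mu : W -> W) :
  FTvN_system ipV ipW lam ->
  reduced_system ipV ipW lam mu ->
  (* (a) ran mu = ran lam and mu^2 = mu *)
  ((forall w, (exists w', mu w' = w) <-> (exists x, lam x = w)) /\
   (forall w, mu (mu w) = mu w)) /\
  (* (b) lam(C_V) = C_W and mu(C_W) = C_W *)
  (forall w,
     ((exists x, ftvn_center ipV ipW lam x /\ lam x = w) <-> ftvn_center ipW ipW mu w) /\
     ((exists w', ftvn_center ipW ipW mu w' /\ mu w' = w) <-> ftvn_center ipW ipW mu w)) /\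
  (* (c) the four sets are subspaces of equal dimension *)
  (exists (UV : {vspace V}) (UlV UmW UW : {vspace W}),
     (forall x, x \in UV <-> ftvn_center ipV ipW lam x) /\
     (forall w, w \in UlV <-> exists x, ftvn_center ipV ipW lam x /\ lam x = w) /\
     (forall w, w \in UmW <-> exists w', ftvn_center ipW ipW mu w' /\ mu w' = w) /\
     (forall w, w \in UW <-> ftvn_center ipW ipW mu w) /\
     \dim UV = \dim UlV /\ \dim UlV = \dim UmW /\ \dim UmW = \dim UW) /\
  (* (d) unit elements correspond *)
  (forall e : V, ftvn_unit ipV ipW lam e <-> ftvn_unit ipW ipW mu (lam e)).
Proof.
move=> ftvn red; have ftvn_mu : FTvN_system ipW ipW mu by case: red.
split; first by split=> w; [exact: (range_mu red) | exact: (mu_idem red)].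
split; first by move=> w; rewrite (lam_center_image ftvn red) (mu_center_image ftvn red).
split; last by move=> e; exact: (unit_lam ftvn red).
have [UV UVE] := vspace_of_pred (center0 ftvn) (center_comb ftvn).
have [UW UWE] := vspace_of_pred (center0 ftvn_mu) (center_comb ftvn_mu).
have lam_imageE w : w \in UW <-> exists x, ftvn_center ipV ipW lam x /\ lam x = w.
  by rewrite UWE (lam_center_image ftvn red).
have mu_imageE w : w \in UW <-> exists w', ftvn_center ipW ipW mu w' /\ mu w' = w.
  by rewrite UWE (mu_center_image ftvn red).
exists UV, UW, UW, UW; do 4 split => //; split=> //.
apply: (@dimv_eq_bij_on _ _ _ _ _ lam).
- by move=> a x y /UVE Cx /UVE Cy; exact: (lam_center_comb ftvn).
- by move=> x /UVE Cx; apply/lam_imageE; exists x.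
- by move=> x _ /eqP; rewrite (lam_eq0 ftvn) => /eqP.
- by move=> w /lam_imageE[x [Cx <-]]; exists x => //; apply/UVE.
Qed.
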